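(* $\mathbf{CF_{REG}}=\mathbf{CF}$, where $\mathbf{CF}$ is the family of context-free languages and $\mathbf{CF_{REG}}$ is the family of all languages $L(G,F)$ such that $G=(V,T,P,S)$ is a context-free grammar and $F\subseteq W^*$ is a regular language for some $W\subseteq V$.
   Context: A context-free grammar $G=(V,T,P,S)$ has total alphabet $V$, terminal alphabet $T\subseteq V$, nonterminal alphabet $N=V-T$, finite rule set $P\subseteq N\times V^*$, start symbol $S\in N$; $\phi(G)=\{w\in V^*\mid S\Rightarrow^* w\}$ is its set of sentential forms. For $X\subseteq V$, $\pi_X$ denotes the homomorphism from $V^*$ to $X^*$ with $\pi_X(a)=a$ for $a\in X$ and $\pi_X(a)=\varepsilon$ for $a\in V-X$. For $W\subseteq V$ and $F\subseteq W^*$, set $\phi(G,F)=\{x\in\phi(G)\mid \pi_W(x)\in F\}$ and $L(G,F)=\{\pi_T(y)\mid y\in\phi(G,F),\ \pi_{N-W}(y)=\varepsilon\}$. *)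

From mathcomp Require Import all_boot.

(* Nonterminals form a finite type [nt G]; the total alphabet is V = T + N,
   terminals being [inl a] and nonterminals [inr A]. *)
Record cfg (T : finType) := CFG {
  nt : finType;
  rules : seq (nt * seq (T + nt));
  start : nt }.
Arguments nt {T}. Arguments rules {T}. Arguments start {T}.

Definition sym {T : finType} (G : cfg T) : finType := (T + nt G)%type.

Definition step {T : finType} (G : cfg T) (u v : seq (sym G)) : Prop :=
  exists (x y : seq (sym G)) (A : nt G) (w : seq (sym G)),
    (A, w) \in rules G /\ u = x ++ inr A :: y /\ v = x ++ w ++ y.

Inductive derives {T : finType} (G : cfg T) : seq (sym G) -> seq (sym G) -> Prop :=
| derives_refl (u : seq (sym G)) : derives G u u
| derives_step (u v w : seq (sym G)) : step G u v -> derives G v w -> derives G u w.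

Definition sentential {T : finType} (G : cfg T) (x : seq (sym G)) : Prop :=
  derives G [:: inr (start G)] x.

Definition proj {A : Type} (X : pred A) (x : seq A) : seq A := filter X x.

Definition is_nt {T : finType} (G : cfg T) : pred (sym G) :=
  fun s => if s is inr _ then true else false.

Definition projT {T : finType} (G : cfg T) (x : seq (sym G)) : seq T :=
  pmap (fun s : sym G => if s is inl a then Some a else None) x.

Record dfa (A : finType) := DFA {
  dstate : finType;
  dinit : dstate;
  dacc : pred dstate;
  dtrans : dstate -> A -> dstate }.
Arguments dstate {A}. Arguments dinit {A}. Arguments dacc {A}. Arguments dtrans {A}.

Definition dfa_accepts {A : finType} (D : dfa A) (w : seq A) : bool :=
  dacc D (foldl (dtrans D) (dinit D) w).

Definition regular {A : finType} (L : seq A -> Prop) : Prop :=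
  exists D : dfa A, forall w, L w <-> dfa_accepts D w.

Definition cf_generates {T : finType} (G : cfg T) (w : seq T) : Prop :=
  sentential G (map inl w).

Definition is_CF {T : finType} (L : seq T -> Prop) : Prop :=
  exists G : cfg T, forall w, L w <-> cf_generates G w.

Definition phiGF {T : finType} (G : cfg T) (W : pred (sym G))
  (F : seq (sym G) -> Prop) (x : seq (sym G)) : Prop :=
  sentential G x /\ F (proj W x).

Definition LGF {T : finType} (G : cfg T) (W : pred (sym G))
  (F : seq (sym G) -> Prop) (w : seq T) : Prop :=
  exists y, phiGF G W F y /\
    proj (fun s => is_nt G s && ~~ W s) y = [::] /\ w = projT G y.

(* membership of L in the family CF_REG: L = L(G,F) for a CFG G, some W subset of V
   and a regular F subset of W^* (F given as a regular language over V all of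
   whose words lie in W^* ) *)
Definition is_CF_REG {T : finType} (L : seq T -> Prop) : Prop :=
  exists (G : cfg T) (W : pred (sym G)) (F : seq (sym G) -> Prop),
    regular F /\ (forall x, F x -> all W x) /\
    (forall w, L w <-> LGF G W F w).

From mathcomp Require Import all_boot.

(* Given a DFA D for F, the classical triple construction builds F into the
   grammar: the nonterminal (p, X, q) generates the terminal yields of the
   sentential forms y derived from X that contain no nonterminal outside W and
   whose W-projection drives D from p to q.  A W-nonterminal may stay as a leaf
   of the derivation, firing its own transition; other nonterminals must be
   rewritten.  Derivations are handled as parse forests ([tderives]) so that
   the subderivation of each symbol can be annotated independently.
   Conversely, L(G) = L(G, {eps}) with W empty. *)

Set Implicit Arguments.
Unset Strict Implicit.
Unset Printing Implicit Defensive.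

Lemma map_eq_cat (A B : Type) (f : A -> B) w v1 v2 :
  map f w = v1 ++ v2 ->
  exists w1 w2, [/\ w = w1 ++ w2, v1 = map f w1 & v2 = map f w2].
Proof.
move=> E; exists (take (size v1) w), (drop (size v1) w).
by rewrite cat_take_drop map_take map_drop E take_size_cat ?drop_size_cat.
Qed.

Lemma filter_nilP (A : eqType) (a : pred A) s :
  reflect (filter a s = [::]) (all (predC a) s).
Proof. by rewrite all_predC has_filter negbK; exact: eqP. Qed.

Section Derivations.
Variables (T : finType) (G : cfg T).

Inductive tderives : seq (sym G) -> seq (sym G) -> Prop :=
| tderives_nil : tderives [::] [::]
| tderives_cons X u v : tderives u v -> tderives (X :: u) (X :: v)
| tderives_rule A Xs u v1 v2 : (A, Xs) \in rules G ->
    tderives Xs v1 -> tderives u v2 -> tderives (inr A :: u) (v1 ++ v2).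

Lemma tderives_refl u : tderives u u.
Proof. by elim: u => [|X u]; [exact: tderives_nil | exact: tderives_cons]. Qed.

Lemma tderives_rule1 A Xs v :
  (A, Xs) \in rules G -> tderives Xs v -> tderives [:: inr A] v.
Proof. by move=> HA Dv; rewrite -[v]cats0; exact: tderives_rule HA Dv tderives_nil. Qed.

Lemma tderives_cat u1 u2 v1 v2 :
  tderives u1 v1 -> tderives u2 v2 -> tderives (u1 ++ u2) (v1 ++ v2).
Proof.
move=> D1 D2; elim: D1 => [|X u v _ IH|A Xs u w1 w2 HA Dw _ _ IH] //=.
- exact: tderives_cons.
- by rewrite -catA; exact: tderives_rule HA Dw IH.
Qed.

Lemma tderives_cat_inv u1 u2 v : tderives (u1 ++ u2) v ->
  exists v1 v2, [/\ v = v1 ++ v2, tderives u1 v1 & tderives u2 v2].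
Proof.
elim: u1 v => [|X u1 IH] v /= Dv; first by exists [::], v; split => //; exact: tderives_nil.
inversion Dv as [|? ? w Dw|A Xs ? w1 w2 HA Dw1 Dw]; subst;
  have [v1 [v2 [-> D1 D2]]] := IH _ Dw.
- by exists (X :: v1), v2; split => //; exact: tderives_cons.
- exists (w1 ++ v1), v2; split; [by rewrite catA | exact: tderives_rule HA Dw1 D1 | by []].
Qed.

Lemma derives_trans u v w : derives G u v -> derives G v w -> derives G u w.
Proof. by elim=> // u' v' w' S _ IH /IH; exact: derives_step. Qed.

Lemma derives_context x y u v :
  derives G u v -> derives G (x ++ u ++ y) (x ++ v ++ y).
Proof.
elim=> [w|u' v' w [x' [y' [A [r [HA [-> ->]]]]]] _ IH]; first exact: derives_refl.
apply: derives_step IH; exists (x ++ x'), (y' ++ y), A, r.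
by rewrite -!catA.
Qed.

Lemma derives_cat u1 u2 v1 v2 :
  derives G u1 v1 -> derives G u2 v2 -> derives G (u1 ++ u2) (v1 ++ v2).
Proof.
move=> D1 D2; apply: (@derives_trans _ (v1 ++ u2)).
- by have := derives_context [::] u2 D1.
- by have := derives_context v1 [::] D2; rewrite !cats0.
Qed.

Lemma derivesP u v : derives G u v <-> tderives u v.
Proof.
split.
- elim=> [w|u' v' w [x [y [A [r [HA [-> ->]]]]]] _ IH]; first exact: tderives_refl.
  have [vx [vm [-> Dx /tderives_cat_inv[vr [vy [-> Dr Dy]]]]]] := tderives_cat_inv IH.
  by apply: tderives_cat Dx _; exact: tderives_rule HA Dr Dy.
- elim=> [|X u' v' _|A Xs u' v1 v2 HA _ D1 _ D2]; first exact: derives_refl.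
  + exact: (@derives_cat [:: X]) (derives_refl _ _).
  + by apply: derives_step (derives_cat D1 D2); exists [::], u', A, Xs.
Qed.

End Derivations.

Arguments tderives {T} G.

Section TripleConstruction.
Variables (T : finType) (G : cfg T) (W : pred (sym G)) (D : dfa (sym G)).
Local Notation Q := (dstate D).

Definition wstep (p : Q) (s : sym G) : Q := if W s then dtrans D p s else p.

Definition wrun (p : Q) (y : seq (sym G)) : Q := foldl wstep p y.

Lemma wrun_filter p y : wrun p y = foldl (dtrans D) p (filter W y).
Proof. by elim: y p => //= s y IH p; rewrite /wstep; case: (W s). Qed.

Definition nts_in_W (y : seq (sym G)) : bool := all (fun s => is_nt G s ==> W s) y.

Lemma nts_in_WP y : reflect (proj (fun s => is_nt G s && ~~ W s) y = [::]) (nts_in_W y).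
Proof.
rewrite /nts_in_W (eq_all (a2 := predC (fun s => is_nt G s && ~~ W s))).
  exact: filter_nilP.
by move=> s; rewrite /= negb_and negbK implybE.
Qed.

Definition state_seqs n : seq (seq Q) := codom (fun t : n.-tuple Q => val t).

Lemma mem_state_seqs n qs : (qs \in state_seqs n) = (size qs == n).
Proof.
apply/codomP/eqP => [[t ->]|Hs]; first exact: size_tuple.
by exists (Tuple (introT eqP Hs)).
Qed.

Fixpoint annotate (p : Q) (Xs : seq (sym G)) (qs : seq Q) : seq (option (Q * sym G * Q)) :=
  if (Xs, qs) is (X :: Xs', q :: qs') then Some (p, X, q) :: annotate q Xs' qs' else [::].

Local Notation NT := (option (Q * sym G * Q)).

Definition triple_rules : seq (NT * seq (T + NT)) :=
  [seq (None, [:: inr (Some (dinit D, inr (start G), f))]) | f <- enum (dacc D)]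
  ++ [seq (Some (p, inl a, wstep p (inl a)), [:: inl a]) | p <- enum Q, a <- enum T]
  ++ [seq (Some (p, inr B, wstep p (inr B)), [::]) | p <- enum Q, B <- enum (preim inr W)]
  ++ flatten [seq [seq (Some (p, inr r.1, last p qs), map inr (annotate p r.2 qs))
                  | p <- enum Q, qs <- state_seqs (size r.2)] | r <- rules G].

Definition triple_grammar : cfg T := @CFG T _ triple_rules None.

Inductive triple_rule : NT -> seq (T + NT) -> Prop :=
| TripleStart f : dacc D f -> triple_rule None [:: inr (Some (dinit D, inr (start G), f))]
| TripleTerm p a : triple_rule (Some (p, inl a, wstep p (inl a))) [:: inl a]
| TripleLeaf p B : W (inr B) -> triple_rule (Some (p, inr B, wstep p (inr B))) [::]
| TripleLift p B Xs qs : (B, Xs) \in rules G -> size qs = size Xs ->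
    triple_rule (Some (p, inr B, last p qs)) (map inr (annotate p Xs qs)).

Lemma triple_rulesP A rhs : (A, rhs) \in rules triple_grammar <-> triple_rule A rhs.
Proof.
rewrite /= !mem_cat; split.
- case/or4P.
  + by case/mapP=> f; rewrite mem_enum => Hf [-> ->]; exact: TripleStart.
  + by case/allpairsP=> -[p a] [_ _ [-> ->]]; exact: TripleTerm.
  + by case/allpairsP=> -[p B] [_ /= HB [-> ->]]; apply: TripleLeaf; rewrite mem_enum in HB.
  + case/flattenP=> _ /mapP[[B Xs] HB ->] /allpairsP[[p qs] /= [_ Hqs [-> ->]]].
    by apply: TripleLift => //; apply/eqP; rewrite -mem_state_seqs.
- case=> [f Hf|p a|p B HB|p B Xs qs HB Hs]; apply/or4P.
  + by constructor 1; apply: map_f; rewrite mem_enum.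
  + by constructor 2; apply: allpairs_f; rewrite mem_enum.
  + by constructor 3; apply: allpairs_f; rewrite mem_enum.
  + constructor 4; apply/flattenP; eexists; first exact: (map_f _ HB).
    by apply: allpairs_f; rewrite ?mem_enum ?mem_state_seqs ?Hs.
Qed.

Definition realizes (Xs : seq (sym G)) (p q : Q) (w : seq T) : Prop :=
  exists2 y, tderives G Xs y & [/\ nts_in_W y, projT G y = w & wrun p y = q].

Lemma realizes_nil p : realizes [::] p p [::].
Proof. by exists [::]; first exact: tderives_nil. Qed.

Lemma realizes_cat Xs1 Xs2 p q r w1 w2 :
  realizes Xs1 p q w1 -> realizes Xs2 q r w2 -> realizes (Xs1 ++ Xs2) p r (w1 ++ w2).
Proof.
move=> [y1 D1 [N1 <- R1]] [y2 D2 [N2 <- R2]]; exists (y1 ++ y2).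
  exact: tderives_cat.
move: N1 N2; rewrite /nts_in_W all_cat => -> ->.
by rewrite /projT pmap_cat /wrun foldl_cat -/(wrun p y1) R1.
Qed.

Definition realizes_accepting (w : seq T) : Prop :=
  exists2 f, dacc D f & realizes [:: inr (start G)] (dinit D) f w.

Definition sem_sym (s : sym triple_grammar) (w : seq T) : Prop :=
  match s with
  | inl a => w = [:: a]
  | inr None => realizes_accepting w
  | inr (Some (p, X, q)) => realizes [:: X] p q w
  end.

Fixpoint sem_word (u : seq (sym triple_grammar)) (w : seq T) : Prop :=
  if u is s :: u' then exists w1 w2, [/\ w = w1 ++ w2, sem_sym s w1 & sem_word u' w2]
  else w = [::].

Lemma sem_annotate p Xs qs w : size qs = size Xs ->
  sem_word (map inr (annotate p Xs qs)) w -> realizes Xs p (last p qs) w.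
Proof.
elim: Xs p qs w => [|X Xs IH] p [|q qs] w //=; first by move=> _ ->; exact: realizes_nil.
move=> [Hs] [w1 [w2 [-> H1 H2]]]; exact: realizes_cat H1 (IH _ _ _ Hs H2).
Qed.

Lemma sem_rule A rhs w : triple_rule A rhs -> sem_word rhs w -> sem_sym (inr A) w.
Proof.
case=> [f Hf|p a|p B HB|p B Xs qs HB Hs] /=.
- by move=> [w1 [_ [-> H1 ->]]]; rewrite cats0; exists f.
- move=> [_ [_ [-> -> ->]]]; exists [:: inl a]; first exact: tderives_refl.
  by rewrite /wrun /=.
- move->; exists [:: inr B]; first exact: tderives_refl.
  by rewrite /nts_in_W /= HB.
- move/(sem_annotate Hs) => [y Dy Hy]; exists y => //.
  exact: tderives_rule1 HB Dy.
Qed.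

Lemma triple_sound u w : tderives triple_grammar u (map inl w) -> sem_word u w.
Proof.
move Ev : (map inl w) => v Du; elim: Du w Ev => [|X u' v' _ IH|A rhs u' v1 v2 HA _ IH1 _ IH2] w.
- by case: w.
- by case: w => [|a w] //= [<- /IH]; exists [:: a], w.
- case/map_eq_cat=> w1 [w2 [-> /esym/IH1 H1 /esym/IH2 H2]]; exists w1, w2; split => //.
  exact: sem_rule ((triple_rulesP _ _).1 HA) H1.
Qed.

Lemma tderives_leaf p X : is_nt G X ==> W X ->
  tderives triple_grammar [:: inr (Some (p, X, wstep p X))] (map inl (projT G [:: X])).
Proof.
case: X => [a|B] /= HB.
- by apply: tderives_rule1 (tderives_refl _); apply/triple_rulesP/TripleTerm.
- apply: (tderives_rule1 (Xs := [::])); last exact: tderives_nil.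
  exact/triple_rulesP/TripleLeaf.
Qed.

Lemma triple_complete Xs y : tderives G Xs y -> nts_in_W y -> forall p,
  exists2 qs, size qs = size Xs & wrun p y = last p qs /\
    tderives triple_grammar (map inr (annotate p Xs qs)) (map inl (projT G y)).
Proof.
elim=> [|X u v _ IH|B Xs' u v1 v2 HB _ IH1 _ IH2] Hy p; move: Hy; rewrite /nts_in_W.
- by exists [::]; split; last exact: tderives_nil.
- case/andP=> HX /IH/(_ (wstep p X)) [qs Hs [R Dv]].
  exists (wstep p X :: qs); first by rewrite /= Hs.
  split=> //; rewrite -[X :: v]cat1s /projT pmap_cat map_cat.
  exact: tderives_cat (tderives_leaf p HX) Dv.
- rewrite all_cat => /andP[N1 N2].
  have [qs1 Hs1 [R1 D1]] := IH1 N1 p.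
  have [qs2 Hs2 [R2 D2]] := IH2 N2 (wrun p v1).
  exists (wrun p v1 :: qs2); first by rewrite /= Hs2.
  split; first by rewrite /wrun foldl_cat -/(wrun p v1) -/(wrun _ v2) R2.
  rewrite R1 in D2 *; rewrite /= /projT pmap_cat map_cat.
  by apply: tderives_rule D1 D2; apply/triple_rulesP/TripleLift.
Qed.

Lemma LGF_dfaP w : LGF G W (dfa_accepts D) w <-> realizes_accepting w.
Proof.
split.
- move=> [y [[/derivesP Dy HF] [/nts_in_WP Ny ->]]]; exists (wrun (dinit D) y).
    by rewrite wrun_filter.
  by exists y.
- move=> [f Hf [y Dy [/nts_in_WP Ny <- Rf]]]; exists y; split=> //; split; first exact/derivesP.
  by rewrite /dfa_accepts -wrun_filter Rf.
Qed.

Lemma triple_grammarP w : cf_generates triple_grammar w <-> realizes_accepting w.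
Proof.
split.
- by move/derivesP/triple_sound=> [w1 [w2 [-> H1 ->]]]; rewrite cats0.
- move=> [f Hf [y Dy [Ny <- Rf]]]; apply/derivesP.
  have [[|q [|]] //= _ [Rq Dq]] := triple_complete Dy Ny (dinit D).
  rewrite -Rq Rf in Dq; apply: tderives_rule1 Dq.
  exact/triple_rulesP/TripleStart.
Qed.

End TripleConstruction.

Lemma LGF_ext (T : finType) (G : cfg T) W (F F' : seq (sym G) -> Prop) w :
  (forall x, F x <-> F' x) -> LGF G W F w <-> LGF G W F' w.
Proof. by move=> HF; split=> -[y [[Sy Fy] Hy]]; exists y; split=> //; split=> //; apply/HF. Qed.

Lemma CF_REG_sub_CF (T : finType) (L : seq T -> Prop) : is_CF_REG L -> is_CF L.
Proof.
(* F need not lie in W^*: only the W-projections of sentential forms are tested. *)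
move=> [G [W [F [[D HD] [_ HL]]]]]; exists (triple_grammar W D) => w.
apply: iff_trans (HL w) (iff_trans (LGF_ext W w HD) _).
exact: iff_trans (LGF_dfaP W D w) (iff_sym (triple_grammarP W D w)).
Qed.

Lemma regular_nil (A : finType) : regular (fun x : seq A => x = [::]).
Proof.
exists (@DFA A bool true id (fun _ _ => false)) => -[|a w]; rewrite /dfa_accepts //=.
suff -> : foldl (fun=> xpred0) false w = false by [].
by elim: w.
Qed.

Lemma LGF_pred0_nil (T : finType) (G : cfg T) w :
  LGF G xpred0 (fun x => x = [::]) w <-> cf_generates G w.
Proof.
split.
- move=> [y [[Sy _] [Hy ->]]]; rewrite /cf_generates; suff -> : map inl (projT G y) = y by [].
  by elim: y {Sy} Hy => //= -[a|A] y IH //= /IH ->.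
- move=> Hw; exists (map inl w); split; first by split; last exact: filter_pred0.
  split; first by elim: w {Hw}.
  by elim: w {Hw} => //= a w <-.
Qed.

Lemma CF_sub_CF_REG (T : finType) (L : seq T -> Prop) : is_CF L -> is_CF_REG L.
Proof.
move=> [G HG]; exists G, xpred0, (fun x => x = [::]).
split; first exact: regular_nil.
split; first by move=> x ->.
by move=> w; apply: iff_trans (HG w) (iff_sym (LGF_pred0_nil _ _)).
Qed.

Theorem theorem1 (T : finType) (L : seq T -> Prop) : is_CF_REG L <-> is_CF L.
Proof. by split; [exact: CF_REG_sub_CF | exact: CF_sub_CF_REG]. Qed.
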